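(* Let $n=5$, let $x_1<x_2<\cdots<x_5$ be fixed real numbers and $Y_i=\beta_0+\beta_1x_i+\varepsilon_i$ ($i=1,\dots,5$) with $\varepsilon_1,\dots,\varepsilon_5$ i.i.d. with a continuous distribution. Let $s_1<s_2<\cdots<s_{10}$ be the ten slopes $S_{ij}=(Y_i-Y_j)/(x_i-x_j)$, $i<j$, sorted increasingly, and let $w_1<w_2<\cdots<w_{55}$ be the $55$ Walsh averages $(s_i+s_j)/2$, $1\le i\le j\le 10$, sorted increasingly. Then: (a) $s_2\le w_9$ if and only if $2s_2\le s_1+s_9$; (b) $w_{47}\le s_9$ if and only if $s_2+s_{10}\le 2s_9$.
   Context: Ties among the slopes and among the Walsh averages occur with probability zero and are ignored, i.e. all slopes are assumed pairwise distinct and all Walsh averages pairwise distinct. *)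

From HB Require Import structures.
From mathcomp Require Import all_boot all_order all_algebra.
From mathcomp Require Import reals.
Set Implicit Arguments. Unset Strict Implicit. Unset Printing Implicit Defensive.
Import Order.TTheory GRing.Theory Num.Theory.
Local Open Scope ring_scope.

Definition slope (R : realType) (x Y : 'I_5 -> R) (i j : 'I_5) : R :=
  (Y i - Y j) / (x i - x j).

Definition slopes (R : realType) (x Y : 'I_5 -> R) : seq R :=
  [seq slope x Y p.1 p.2 | p <- [seq p <- (enum [pred _ : 'I_5 * 'I_5 | true]) | (val p.1 < val p.2)%N]].

Definition sorted_slopes (R : realType) (x Y : 'I_5 -> R) : seq R :=
  sort <=%R (slopes x Y).

(* s_k, 1-based: k-th smallest slope. *)
Definition s_ (R : realType) (x Y : 'I_5 -> R) (k : nat) : R :=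
  nth 0 (sorted_slopes x Y) k.-1.

Definition walsh (R : realType) (x Y : 'I_5 -> R) : seq R :=
  [seq (s_ x Y (val p.1).+1 + s_ x Y (val p.2).+1) / 2
     | p <- [seq p <- (enum [pred _ : 'I_10 * 'I_10 | true]) | (val p.1 <= val p.2)%N]].

(* w_k, 1-based: k-th smallest Walsh average. *)
Definition w_ (R : realType) (x Y : 'I_5 -> R) (k : nat) : R :=
  nth 0 (sort <=%R (walsh x Y)) k.-1.

(** Counting is enough.  In the sorted list of Walsh averages, [s_2 <= w_k]
    holds iff fewer than [k] averages lie below [s_2].  An average
    [(s_i + s_j)/2] with [i <= j] lies below [s_2] only if [i = 1], and then
    exactly when [s_j < 2 s_2 - s_1]; so the averages below [s_2] are counted
    by the slopes below [2 s_2 - s_1], and [w_9 >= s_2] becomes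
    [s_9 >= 2 s_2 - s_1].  Part (b) is the mirror image: an average above
    [s_9] must involve [s_10]. *)

From HB Require Import structures.
From mathcomp Require Import all_boot all_order all_algebra.
From mathcomp Require Import reals.
From mathcomp Require Import lra zify.
Import Order.TTheory GRing.Theory Num.Theory.
Local Open Scope ring_scope.

Lemma count_enumT (T : finType) (a : pred T) : count a (enum T) = #|a|.
Proof. by rewrite enumT cardE /enum_mem size_filter. Qed.

Lemma enum_ord_pairs n m :
  [seq (val p.1, val p.2) | p <- enum [pred _ : 'I_n * 'I_m | true]] =
  [seq (i, j) | i <- iota 0 n, j <- iota 0 m].
Proof.
rewrite (@eq_enum _ _ {: 'I_n * 'I_m}) // enumT unlock /= /prod_enum.
rewrite -(val_enum_ord n) -(val_enum_ord m).
by elim: (enum 'I_n) => //= i s IH; rewrite map_cat IH -!map_comp.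
Qed.

Lemma size_filter_ord_pairs n m (P : rel nat) :
  size [seq p <- enum [pred _ : 'I_n * 'I_m | true] | P (val p.1) (val p.2)] =
  count (fun q => P q.1 q.2) [seq (i, j) | i <- iota 0 n, j <- iota 0 m].
Proof. by rewrite -enum_ord_pairs count_map size_filter. Qed.

Lemma card_nth {T : Type} (x0 : T) (s : seq T) (n : nat) (b : pred T) :
  size s = n -> #|[pred i : 'I_n | b (nth x0 s i)]| = count b s.
Proof.
move=> size_s; rewrite -count_enumT -[in RHS](mkseq_nth x0 s) size_s.
by rewrite /mkseq -val_enum_ord -map_comp count_map.
Qed.

Lemma card_row {T : finType} (i0 : T) (b : pred T) :
  #|[pred p : T * T | (p.1 == i0) && b p.2]| = #|b|.
Proof.
rewrite -[RHS]mul1n -(cards1 i0) -[#|b|]cardsE -cardsX.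
by apply: eq_card => -[i j]; rewrite !inE.
Qed.

Lemma card_column {T : finType} (j0 : T) (b : pred T) :
  #|[pred p : T * T | (p.2 == j0) && b p.1]| = #|b|.
Proof.
rewrite -[RHS]muln1 -(cards1 j0) -[#|b|]cardsE -cardsX.
by apply: eq_card => -[i j]; rewrite !inE andbC.
Qed.

Section OrderStatistics.
Context {disp : Order.disp_t} {T : orderType disp}.
Variable x0 : T.
Context {u : seq T}.
Hypothesis u_sorted : sorted <=%O u.

Lemma le_nth_count v k :
  (k < size u)%N -> (v <= nth x0 u k)%O = (count (< v)%O u <= k)%N.
Proof.
move=> k_lt; apply/idP/idP => [v_le|count_le]; last first.
  by apply: nth_count_ge => //; rewrite count_le k_lt.
rewrite leqNgt; apply: contraL v_le => /(nth_count_lt x0 u_sorted).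
by rewrite ltNge.
Qed.

Lemma nth_le_count v k :
  (k < size u)%N -> (nth x0 u (size u - k.+1) <= v)%O = (count (> v)%O u <= k)%N.
Proof.
move=> k_lt; have le_gt_split := count_le_gt v u.
have gt_size := count_size (> v)%O u.
apply/idP/idP => [le_v|gt_le_k].
  rewrite leqNgt; apply: contraL le_v => k_lt_count; rewrite -ltNge.
  by apply: nth_count_gt => //; lia.
by apply: nth_count_le; lia.
Qed.

End OrderStatistics.

Definition walsh_avgs {R : realFieldType} (n : nat) (s : seq R) : seq R :=
  [seq (s`_(val p.1) + s`_(val p.2)) / 2
     | p <- [seq p <- enum [pred _ : 'I_n * 'I_n | true] | (val p.1 <= val p.2)%N]].

Section WalshAverages.
Context {R : realFieldType} {n : nat} {s : seq R}.
Hypotheses (s_sorted : sorted <=%R s) (size_s : size s = n).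

Let W := walsh_avgs n s.

Lemma count_walsh_avgs (a : pred R) :
  count a W =
  #|[pred p : 'I_n * 'I_n | (val p.1 <= val p.2)%N && a ((s`_p.1 + s`_p.2) / 2)]|.
Proof.
by rewrite count_map count_filter -count_enumT; apply: eq_count => p; rewrite /= andbC.
Qed.

Lemma leq_size_walsh_avgs : (n <= size W)%N.
Proof.
have diag_inj : injective (fun i : 'I_n => (i, i)) by move=> i j [].
rewrite -count_predT count_walsh_avgs -{1}(card_ord n) -(card_imset _ diag_inj).
by apply: subset_leq_card; apply/subsetP => _ /imsetP[i _ ->]; rewrite inE /= leqnn.
Qed.

Lemma count_walsh_avgs_row (a b : pred R) : (0 < n)%N ->
  (forall i j, (i <= j < n)%N -> a ((s`_i + s`_j) / 2) = (i == 0%N) && b s`_j) ->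
  count a W = count b s.
Proof.
move=> n_gt0 a_row; rewrite count_walsh_avgs -(card_nth 0 _ _ b size_s).
rewrite -(card_row (Ordinal n_gt0)); apply: eq_card => -[i j].
rewrite !inE /= -val_eqE /=.
case: (leqP i j) => [le_ij|lt_ji]; first by rewrite a_row // le_ij ltn_ord.
by case: eqP => // i0; move: lt_ji; rewrite i0.
Qed.

Lemma count_walsh_avgs_column (a b : pred R) : (0 < n)%N ->
  (forall i j, (i <= j < n)%N -> a ((s`_i + s`_j) / 2) = (j == n.-1) && b s`_i) ->
  count a W = count b s.
Proof.
move=> n_gt0 a_column; have last_lt : (n.-1 < n)%N by rewrite prednK.
rewrite count_walsh_avgs -(card_nth 0 _ _ b size_s).
rewrite -(card_column (Ordinal last_lt)); apply: eq_card => -[i j].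
rewrite !inE /= -val_eqE /=.
case: (leqP i j) => [le_ij|lt_ji]; first by rewrite a_column // le_ij ltn_ord.
case: eqP => // jn; move: lt_ji (ltn_ord i); rewrite jn; lia.
Qed.

Lemma sorted_nth_le i j : (i <= j < n)%N -> s`_i <= s`_j.
Proof.
by case/andP=> le_ij lt_jn; apply: le_sorted_leq_nth; rewrite ?inE ?size_s //; lia.
Qed.

Lemma walsh_avg_lt_second i j : (i <= j < n)%N ->
  ((s`_i + s`_j) / 2 < s`_1) = (i == 0%N) && (s`_j < 2 * s`_1 - s`_0).
Proof.
case: i => [|i] ij /=; first by apply/idP/idP => ?; lra.
have le_1i : s`_1 <= s`_i.+1 by apply: sorted_nth_le; lia.
have le_ij : s`_i.+1 <= s`_j by exact: sorted_nth_le.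
by apply/negbTE; rewrite -leNgt; lra.
Qed.

Lemma walsh_avg_gt_penultimate i j : (i <= j < n)%N ->
  (s`_n.-2 < (s`_i + s`_j) / 2) = (j == n.-1) && (2 * s`_n.-2 - s`_n.-1 < s`_i).
Proof.
move=> ij; case: eqVneq => [-> | ne_j] /=; first by apply/idP/idP => ?; lra.
have le_ij : s`_i <= s`_j by exact: sorted_nth_le.
have le_j2 : s`_j <= s`_n.-2 by apply: sorted_nth_le; lia.
by apply/negbTE; rewrite -leNgt; lra.
Qed.

Lemma second_le_nth_walsh_avgs k : (k < n)%N ->
  s`_1 <= (sort <=%R W)`_k <-> 2 * s`_1 <= s`_0 + s`_k.
Proof.
move=> k_lt; have n_gt0 : (0 < n)%N by lia.
have k_lt_W : (k < size (sort <=%R W))%N.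
  by rewrite size_sort (leq_trans k_lt leq_size_walsh_avgs).
rewrite le_nth_count ?sort_le_sorted // count_sort.
rewrite (count_walsh_avgs_row (< s`_1) (< (2 * s`_1 - s`_0)) n_gt0
  walsh_avg_lt_second).
rewrite -(le_nth_count 0 s_sorted) ?size_s //; split=> ?; lra.
Qed.

Lemma nth_walsh_avgs_le_penultimate k : (k < n)%N ->
  (sort <=%R W)`_(size W - k.+1) <= s`_n.-2 <->
  s`_(n - k.+1) + s`_n.-1 <= 2 * s`_n.-2.
Proof.
move=> k_lt; have n_gt0 : (0 < n)%N by lia.
have k_lt_W : (k < size (sort <=%R W))%N.
  by rewrite size_sort (leq_trans k_lt leq_size_walsh_avgs).
rewrite -(size_sort <=%R W) nth_le_count ?sort_le_sorted // count_sort.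
rewrite (count_walsh_avgs_column (> s`_n.-2) (> (2 * s`_n.-2 - s`_n.-1)) n_gt0
  walsh_avg_gt_penultimate).
rewrite -{1}size_s -(nth_le_count 0 s_sorted) ?size_s //; split=> ?; lra.
Qed.

End WalshAverages.

Theorem theorem3 (R : realType) (x : 'I_5 -> R) (beta0 beta1 : R)
    (eps : 'I_5 -> R)
    (hx : forall i j : 'I_5, (i < j)%N -> x i < x j) :
  let Y := fun i => beta0 + beta1 * x i + eps i in
  uniq (slopes x Y) -> uniq (walsh x Y) ->
  (s_ x Y 2 <= w_ x Y 9 <-> 2 * s_ x Y 2 <= s_ x Y 1 + s_ x Y 9) /\
  (w_ x Y 47 <= s_ x Y 9 <-> s_ x Y 2 + s_ x Y 10 <= 2 * s_ x Y 9).
Proof.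
move=> Y _ _.
have s_sorted : sorted <=%R (sorted_slopes x Y) by exact: sort_le_sorted.
have size_s : size (sorted_slopes x Y) = 10%N.
  by rewrite size_sort size_map (size_filter_ord_pairs _ _ ltn).
have size_W : size (walsh_avgs 10 (sorted_slopes x Y)) = 55%N.
  by rewrite size_map (size_filter_ord_pairs _ _ leq).
have walshE : walsh x Y = walsh_avgs 10 (sorted_slopes x Y) by [].
rewrite /w_ walshE; split.
  exact: (second_le_nth_walsh_avgs s_sorted size_s 8 isT).
by have := nth_walsh_avgs_le_penultimate s_sorted size_s 8 isT; rewrite size_W.
Qed.
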